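(* Let $\tau=\{\tau_1,\dots,\tau_n\}$ be an implicit-deadline sporadic task set with $\tau_i=(T_i,C_i,T_i)$, $T_i$ positive integers and $0<C_i\le T_i$, and let $m$ be a positive integer. Then $\tau$ is schedulable on $m$ identical unit-capacity processors by the VC-IDT algorithm if and only if $$\sum_{i=1}^n\frac{C_i}{T_i}\le m.$$
   Context: Sporadic task $\tau_i=(T_i,C_i,T_i)$: it releases jobs at arbitrary real times separated by at least $T_i$. Each job needs at most $C_i$ units of execution within $T_i$ time units of its release, and never executes on two processors simultaneously. VC-IDT algorithm: - Let $\Pi=\gcd(T_1,\dots,T_n)$ and $\Theta_i=\Pi C_i/T_i$. - For each $i$ create a periodic server task $(\Pi,\Theta_i,\Pi)$; this is the MPR interface $\langle\Pi,\Theta_i,1\rangle$ of a one-processor virtual cluster containing only $\tau_i$. - Schedule the server tasks on the $m$ processors with McNaughton's algorithm. In every window $(j\Pi,(j+1)\Pi]$, taking the servers in a fixed order, fill processor $1$ starting at $j\Pi$. When processor $p$ is filled up to $(j+1)\Pi$, the rest of the current server's $\Theta_i$ units go on processor $p+1$ starting at $j\Pi$. - Whenever server $i$ is scheduled, the processor time it receives is used to execute pending jobs of $\tau_i$ in earliest-deadline-first order. $\tau$ is schedulable by VC-IDT if this procedure produces a valid schedule on $m$ processors in which every job of every admissible arrival sequence meets its deadline. *)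

From HB Require Import structures.
From mathcomp Require Import all_boot all_order all_algebra.
From mathcomp Require Import all_classical all_reals all_analysis.

Set Implicit Arguments.
Unset Strict Implicit.
Unset Printing Implicit Defensive.

Import Order.TTheory GRing.Theory Num.Theory.
Local Open Scope ring_scope.
Local Open Scope classical_set_scope.

Section VCIDT.
Variable R : realType.

Definition vc_Pi (n : nat) (T : 'I_n -> nat) : nat := \big[gcdn/0%N]_(i < n) T i.

(* Theta_i = Pi * C_i / T_i : budget of the periodic server of task i *)
Definition vc_Theta (n : nat) (T : 'I_n -> nat) (C : 'I_n -> R) (i : 'I_n) : R :=
  (vc_Pi T)%:R * C i / (T i)%:R.

Definition vc_prefix (n : nat) (T : 'I_n -> nat) (C : 'I_n -> R) (i : 'I_n) : R :=
  \sum_(k < n | (k < i)%N) vc_Theta T C k.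

(* McNaughton's wrap-around schedule of the server tasks (Pi, Theta_i, Pi):
   in window (j Pi, (j+1) Pi], the servers are laid consecutively on the
   "stretched" line, processor p covering positions (p Pi, (p+1) Pi]; the
   instant j Pi + o (0 < o <= Pi) on processor p corresponds to position
   p Pi + o.  Server i occupies positions (prefix_i, prefix_i + Theta_i].
   [vc_server_on T C i p t] : server i executes on processor p (0-indexed)
   at instant t. *)
Definition vc_server_on (n : nat) (T : 'I_n -> nat) (C : 'I_n -> R)
    (i : 'I_n) (p : nat) (t : R) : Prop :=
  exists j : int,
    (j%:~R * (vc_Pi T)%:R < t <= (j + 1)%:~R * (vc_Pi T)%:R) /\
    (vc_prefix T C i < p%:R * (vc_Pi T)%:R + (t - j%:~R * (vc_Pi T)%:R)
       <= vc_prefix T C i + vc_Theta T C i).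

Definition vc_valid_schedule (n : nat) (T : 'I_n -> nat) (C : 'I_n -> R)
    (m : nat) : Prop :=
  [/\ (forall i p t, vc_server_on T C i p t -> (p < m)%N),
      (forall i p p' t, vc_server_on T C i p t -> vc_server_on T C i p' t -> p = p')
    & (forall i i' p t, vc_server_on T C i p t -> vc_server_on T C i' p t -> i = i')].

Definition vc_server_active (n : nat) (T : 'I_n -> nat) (C : 'I_n -> R)
    (i : 'I_n) : set R :=
  [set t | exists p, vc_server_on T C i p t].

(* Admissible job sequence of a sporadic task (Ti, Ci, Ti): job k is released
   at r k, successive releases are separated by at least Ti, and job k needs
   e k <= Ci units of execution.  (Finite sequences are represented by
   padding with jobs of zero execution requirement.) *)
Definition sporadic_arrivals (Ti : nat) (Ci : R) (r e : nat -> R) : Prop :=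
  (forall k, r k + Ti%:R <= r k.+1) /\ (forall k, 0 <= e k <= Ci).

(* x k u = amount of execution job k has received before instant u. *)
Definition job_pending (r e : nat -> R) (x : nat -> R -> R) (k : nat) (u : R) : Prop :=
  r k <= u /\ x k u < e k.

Definition edf_runs (A : set R) (Ti : nat) (r e : nat -> R)
    (x : nat -> R -> R) (k : nat) (u : R) : Prop :=
  A u /\ job_pending r e x k u /\
  (forall k', job_pending r e x k' u -> r k + Ti%:R <= r k' + Ti%:R).

Definition edf_schedule (A : set R) (Ti : nat) (r e : nat -> R)
    (x : nat -> R -> R) : Prop :=
  forall k t,
    measurable [set u : R | u < t /\ edf_runs A Ti r e x k u] /\
    (x k t)%:E = lebesgue_measure [set u : R | u < t /\ edf_runs A Ti r e x k u].

Definition VC_IDT_schedulable (n : nat) (T : 'I_n -> nat) (C : 'I_n -> R)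
    (m : nat) : Prop :=
  vc_valid_schedule T C m /\
  forall (i : 'I_n) (r e : nat -> R) (x : nat -> R -> R),
    sporadic_arrivals (T i) (C i) r e ->
    edf_schedule (vc_server_active T C i) (T i) r e x ->
    forall k, e k <= x k (r k + (T i)%:R).

End VCIDT.

From HB Require Import structures.
From mathcomp Require Import all_boot all_order all_algebra.
From mathcomp Require Import all_classical all_reals all_analysis.
From mathcomp Require Import ring lra.

Set Implicit Arguments.
Unset Strict Implicit.
Unset Printing Implicit Defensive.

Import Order.TTheory GRing.Theory Num.Theory.
Local Open Scope ring_scope.
Local Open Scope classical_set_scope.

(* Write U for the utilization sum C_i / T_i.  McNaughton's wrap-around lays
   the server budgets Theta_i end to end on a line of length Pi * U, cut into
   pieces of length Pi, one per processor: this fits on m processors exactly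
   when U <= m (necessity: the last server ends on processor ceil U - 1), and
   since Theta_i <= Pi no server runs on two processors at once.  Server i
   receives Theta_i in every window of length Pi, hence
   (T_i / Pi) * Theta_i = C_i in every window of length T_i.  If some job of
   task i missed its deadline, take the first one: during its whole window it
   is the pending job with the earliest deadline, so it executes whenever the
   server does and receives C_i units, a contradiction. *)

Section PeriodicSlots.
Variable R : realType.

Definition periodic_slots (P s Th : R) : set R :=
  [set u | exists k : int, k%:~R * P + s < u <= k%:~R * P + s + Th].

Lemma int_window_unique (P t : R) (j j' : int) : 0 < P ->
  j%:~R * P < t <= (j + 1)%:~R * P -> j'%:~R * P < t <= (j' + 1)%:~R * P ->
  j = j'.
Proof.
move=> P_gt0 /andP[jt tj] /andP[j't tj'].
have /lt_le_trans /(_ tj') := jt; have /lt_le_trans /(_ tj) := j't.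
rewrite !ltr_pM2r // !ltr_int !ltzD1 => j'_le_j j_le_j'.
by apply/eqP; rewrite eq_le j_le_j' j'_le_j.
Qed.

Lemma lebesgue_measure_itv_oo (a b : R) : a <= b ->
  lebesgue_measure (`]a, b[ : set R) = (b - a)%:E.
Proof.
rewrite le_eqVlt => /predU1P[<-|ab]; last by rewrite lebesgue_measure_itv /= lte_fin ab.
by rewrite subrr set_itvoo0 ?lexx // measure0.
Qed.

Lemma lebesgue_measure_itv_oo_le (a b : R) (S : set R) :
  a <= b -> measurable S -> `]a, b[ `<=` S -> ((b - a)%:E <= lebesgue_measure S)%E.
Proof.
by move=> ab mS abS; rewrite -lebesgue_measure_itv_oo //; apply: le_measure; rewrite ?inE.
Qed.

(* The slot that starts in (a - P, a] is the one of index floor ((a - s) / P):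
   either the next slot fits in [a, a + P[, or the tail of this slot and the
   head of the next one together have length Th. *)
Lemma periodic_slots_window_measure (P s Th a : R) (S : set R) :
  0 < P -> 0 <= Th <= P -> measurable S ->
  periodic_slots P s Th `&` `[a, a + P[ `<=` S ->
  (Th%:E <= lebesgue_measure S)%E.
Proof.
move=> P_gt0 /andP[Th_ge0 Th_leP] mS slotsS.
pose k := Num.floor ((a - s) / P); pose b := k%:~R * P + s.
have [b_le_a a_lt_bP] : b <= a /\ a < b + P.
  have /andP[] := floor_itv ((a - s) / P).
  by rewrite ler_pdivlMr // ltr_pdivrMr // intrD -/k => ? ?; rewrite /b; lra.
have next_slot : (k + 1)%:~R * P + s = b + P by rewrite intrD /b; lra.
have inS (j : int) (c u : R) : c = j%:~R * P + s -> c < u <= c + Th ->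
    a <= u < a + P -> S u.
  by move=> -> slot win; apply: slotsS; split; [exists j | rewrite /= in_itv].
have [Th_le|Th_gt] := leP Th (a - b).
  apply: (le_trans _ (@lebesgue_measure_itv_oo_le (b + P) (b + P + Th) S _ mS _)).
  - by rewrite lee_fin; lra.
  - lra.
  move=> u; rewrite /= in_itv /= => /andP[? ?]; apply: (inS (k + 1) (b + P)) => //.
    by apply/andP; split; lra.
  by apply/andP; split; lra.
have disj : `]a, b + Th[ `&` `]b + P, a + P[ = set0 :> set R.
  by apply/seteqP; split => // u []; rewrite /= !in_itv /= => /andP[? ?] /andP[? ?]; lra.
apply: (@le_trans _ _ (lebesgue_measure (`]a, b + Th[ `|` `]b + P, a + P[))).
  rewrite measureU //= lebesgue_measure_itv_oo; last lra.
  by rewrite lebesgue_measure_itv_oo -?EFinD ?lee_fin; lra.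
apply: le_measure; rewrite ?inE //; first exact: measurableU.
move=> u [] /=; rewrite in_itv /= => /andP[? ?].
  by apply: (inS k b) => //; apply/andP; split; lra.
by apply: (inS (k + 1) (b + P)) => //; apply/andP; split; lra.
Qed.

Lemma periodic_slots_measure (P s Th a : R) (q : nat) (S : set R) :
  0 < P -> 0 <= Th <= P -> measurable S ->
  periodic_slots P s Th `&` `[a, a + q%:R * P[ `<=` S ->
  ((q%:R * Th)%:E <= lebesgue_measure S)%E.
Proof.
move=> P_gt0 Th_bounds; elim: q S => [|q IH] S mS slotsS.
  by rewrite mul0r measure_ge0.
pose b := a + q%:R * P; have bE : b = a + q%:R * P by [].
have qP_ge0 : 0 <= q%:R * P by rewrite mulr_ge0 // ltW.
have mSl : measurable (S `&` `[a, b[) by apply: measurableI.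
have mSr : measurable (S `&` `[b, b + P[) by apply: measurableI.
have inS u : a <= u < b + P -> periodic_slots P s Th u -> S u.
  move=> win slot; apply: slotsS; split=> //.
  by rewrite /= in_itv /= -natr1 mulrDl mul1r; lra.
have left : ((q%:R * Th)%:E <= lebesgue_measure (S `&` `[a, b[))%E.
  apply: IH => // u [slot]; rewrite /= in_itv /= => /andP[? ?]; split.
    by apply: inS => //; apply/andP; split; lra.
  by apply/andP.
have right : (Th%:E <= lebesgue_measure (S `&` `[b, (b + P)%R[))%E.
  apply: (@periodic_slots_window_measure P s Th b _ P_gt0 Th_bounds mSr) => u [slot].
  rewrite /= in_itv /= => /andP[? ?]; split; last by apply/andP.
  by apply: inS => //; apply/andP; split; lra.
have disj : (S `&` `[a, b[) `&` (S `&` `[b, b + P[) = set0.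
  apply/seteqP; split => // u [[_ +] [_ +]].
  by rewrite /= !in_itv /= => /andP[? ?] /andP[? ?]; lra.
apply: (@le_trans _ _ (lebesgue_measure ((S `&` `[a, b[) `|` (S `&` `[b, b + P[)))).
  by rewrite measureU // -natr1 mulrDl mul1r EFinD leeD.
by apply: le_measure; rewrite ?inE //; [exact: measurableU | move=> u [] []].
Qed.

End PeriodicSlots.

Section EDF.
Variable R : realType.

(* Stated through measurable supersets since the supply [A] need not be
   measurable. *)
Definition min_window_supply (A : set R) (L c : R) : Prop :=
  forall a (S : set R), measurable S -> A `&` `[a, a + L[ `<=` S ->
  (c%:E <= lebesgue_measure S)%E.

Variables (A : set R) (Ti : nat) (Ci : R) (r e : nat -> R) (x : nat -> R -> R).
Hypothesis arrivals : sporadic_arrivals Ti Ci r e.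
Hypothesis edf : edf_schedule A Ti r e x.

Lemma edf_exec_nondecreasing k : {homo x k : u t / u <= t}.
Proof.
move=> u t ut; have [mu xu] := edf k u; have [mt xt] := edf k t.
rewrite -lee_fin xu xt; apply: le_measure; rewrite ?inE // => v /= [vu runs].
by split=> //; apply: lt_le_trans ut.
Qed.

Lemma sporadic_release_gap k k' : (k < k')%N -> r k + Ti%:R <= r k'.
Proof.
have [gap _] := arrivals; have Ti_ge0 : (0 : R) <= Ti%:R by [].
elim: k' => // k' IH; rewrite ltnS leq_eqVlt => /predU1P[<-|/IH le_k']; first exact: gap.
by have := gap k'; lra.
Qed.

Lemma sporadic_release_le k k' : (k <= k')%N -> r k <= r k'.
Proof.
rewrite leq_eqVlt => /predU1P[-> //|/sporadic_release_gap].
by have : (0 : R) <= Ti%:R by []; lra.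
Qed.

Lemma edf_runs_until_missed_deadline k u :
  (forall k', (k' < k)%N -> e k' <= x k' (r k' + Ti%:R)) ->
  x k (r k + Ti%:R) < e k ->
  r k <= u < r k + Ti%:R -> A u -> edf_runs A Ti r e x k u.
Proof.
move=> earlier_met k_misses /andP[rk_le_u u_lt_dl] Au; split=> //; split.
  split=> //; apply: le_lt_trans k_misses.
  by apply: edf_exec_nondecreasing; lra.
move=> k' [_ k'_pending]; rewrite lerD2r.
have [lt_k'k|/sporadic_release_le //] := ltnP k' k.
have dl_le_u : r k' + Ti%:R <= u by have := sporadic_release_gap lt_k'k; lra.
by have := edf_exec_nondecreasing k' dl_le_u; have := earlier_met _ lt_k'k; lra.
Qed.

Lemma edf_meets_deadlines :
  min_window_supply A Ti%:R Ci -> forall k, e k <= x k (r k + Ti%:R).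
Proof.
move=> supply; elim/ltn_ind=> k earlier_met; rewrite leNgt; apply/negP => k_misses.
have [mS xE] := edf k (r k + Ti%:R).
have : (Ci%:E <= (x k (r k + Ti%:R))%:E)%E.
  rewrite xE; apply: (supply (r k)) => // u [Au]; rewrite /= in_itv /= => /andP[? ?].
  by split=> //; apply: edf_runs_until_missed_deadline => //; apply/andP.
rewrite lee_fin; have [_ /(_ k) /andP[_ ek]] := arrivals; lra.
Qed.

End EDF.

Section ServerGeometry.
Variables (R : realType) (n : nat) (T : 'I_n -> nat) (C : 'I_n -> R).
Hypothesis T_gt0 : forall i, (0 < T i)%N.
Hypothesis C_bounds : forall i, 0 < C i <= (T i)%:R.

Local Notation Pi := ((vc_Pi T)%:R : R).
Local Notation Theta := (vc_Theta T C).
Local Notation prefix := (vc_prefix T C).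

Lemma vc_Pi_dvd i : (vc_Pi T %| T i)%N.
Proof. exact: biggcdn_inf. Qed.

Lemma vc_Pi_gt0 (i : 'I_n) : (0 < vc_Pi T)%N.
Proof. exact: dvdn_gt0 (T_gt0 i) (vc_Pi_dvd i). Qed.

Lemma vc_periodsE i : (T i)%:R = (T i %/ vc_Pi T)%:R * Pi.
Proof. by rewrite -natrM divnK // vc_Pi_dvd. Qed.

Lemma vc_Theta_mul_periods i : (T i %/ vc_Pi T)%:R * Theta i = C i.
Proof.
have : (T i)%:R != 0 :> R by rewrite pnatr_eq0 -lt0n.
rewrite /vc_Theta vc_periodsE mulf_eq0 negb_or => /andP[q_neq0 Pi_neq0].
by field; apply/andP.
Qed.

Lemma vc_Theta_gt0 i : 0 < Theta i.
Proof.
have /andP[C_gt0 _] := C_bounds i.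
by rewrite /vc_Theta divr_gt0 ?mulr_gt0 ?ltr0n ?(vc_Pi_gt0 i).
Qed.

Lemma vc_Theta_le_Pi i : Theta i <= Pi.
Proof.
have /andP[_ C_le] := C_bounds i.
rewrite /vc_Theta -mulrA ler_piMr ?ler_pdivrMr ?mul1r ?ltr0n //.
Qed.

Lemma vc_prefix_ge0 i : 0 <= prefix i.
Proof. by apply: sumr_ge0 => k _; exact: ltW (vc_Theta_gt0 k). Qed.

Lemma vc_prefixS i : prefix i + Theta i = \sum_(k < n | (k < i.+1)%N) Theta k.
Proof.
rewrite (bigD1 i) //= addrC; congr (_ + _); apply: eq_bigl => k /=.
by rewrite ltnS ltn_neqAle andbC.
Qed.

Lemma vc_prefix_le_prefix (i i' : 'I_n) :
  (i < i')%N -> prefix i + Theta i <= prefix i'.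
Proof.
move=> lt_ii'; rewrite vc_prefixS /vc_prefix big_mkcond [leRHS]big_mkcond /=.
apply: ler_sum => k _; have Theta_ge0 := ltW (vc_Theta_gt0 k).
case: ifP => [k_le_i|_]; last by case: ifP.
by rewrite (leq_trans k_le_i lt_ii').
Qed.

Lemma vc_prefix_le_sum i : prefix i + Theta i <= \sum_(k < n) Theta k.
Proof.
rewrite vc_prefixS big_mkcond /=; apply: ler_sum => k _.
by have := ltW (vc_Theta_gt0 k); case: ifP.
Qed.

Lemma vc_prefix_last : (0 < n)%N -> exists i, prefix i + Theta i = \sum_(k < n) Theta k.
Proof.
move=> n_gt0; have lt_last : (n.-1 < n)%N by rewrite ltn_predL.
exists (Ordinal lt_last); rewrite vc_prefixS.
by apply: eq_bigl => k; rewrite /= prednK // ltn_ord.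
Qed.

Lemma sum_vc_Theta : \sum_(k < n) Theta k = Pi * \sum_(k < n) C k / (T k)%:R.
Proof. by rewrite mulr_sumr; apply: eq_bigr => k _; rewrite /vc_Theta mulrA. Qed.

Lemma vc_server_active_slots i :
  periodic_slots Pi (prefix i) (Theta i) `<=` vc_server_active T C i.
Proof.
have Pi_gt0 : 0 < Pi by rewrite ltr0n (vc_Pi_gt0 i).
have prefix_ge0 := vc_prefix_ge0 i.
move=> u [k /andP[slot_lo slot_hi]].
pose j := Num.ceil (u / Pi) - 1.
have [ju uj] : j%:~R * Pi < u /\ u <= (j + 1)%:~R * Pi.
  rewrite /j subrK; have := ceilB1_lt (u / Pi); have := ceil_ge (u / Pi).
  by rewrite ler_pdivrMr // ltr_pdivlMr.
have k_le_j : k <= j.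
  by rewrite -ltzD1 -(ltr_int R) -(ltr_pM2r Pi_gt0); lra.
have pE : (`|j - k|%N)%:R = j%:~R - k%:~R :> R.
  by rewrite natr_absz ger0_norm ?subr_ge0 // intrB.
exists `|j - k|%N, j; rewrite pE mulrBl.
by split; apply/andP; split; lra.
Qed.

Lemma vc_server_on_first_window i p t :
  0 < t <= Pi -> prefix i < p%:R * Pi + t <= prefix i + Theta i ->
  vc_server_on T C i p t.
Proof. by move=> win slot; exists 0; rewrite add0r mulr0z mul0r subr0 mulr1z mul1r. Qed.

Lemma vc_server_on_proc_lt m i p t :
  \sum_(k < n) C k / (T k)%:R <= m%:R -> vc_server_on T C i p t -> (p < m)%N.
Proof.
move=> util [j [/andP[jt _] /andP[_ slot_hi]]].
have Pi_gt0 : 0 < Pi by rewrite ltr0n (vc_Pi_gt0 i).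
have := vc_prefix_le_sum i; rewrite sum_vc_Theta => le_sum.
have le_m : Pi * \sum_(k < n) C k / (T k)%:R <= m%:R * Pi.
  by rewrite [leRHS]mulrC ler_pM2l.
by rewrite -(ltr_nat R) -(ltr_pM2r Pi_gt0); lra.
Qed.

Lemma vc_server_on_proc_unique i p p' t :
  vc_server_on T C i p t -> vc_server_on T C i p' t -> p = p'.
Proof.
move=> [j [win /andP[lo hi]]] [j' [win' /andP[lo' hi']]].
have Pi_gt0 : 0 < Pi by rewrite ltr0n (vc_Pi_gt0 i).
move: (int_window_unique Pi_gt0 win win') lo' hi' => <- lo' hi'.
have Theta_le := vc_Theta_le_Pi i.
apply/eqP; rewrite eqn_leq; apply/andP.
by split; rewrite -ltnS -(ltr_nat R) -natr1 -(ltr_pM2r Pi_gt0) mulrDl mul1r; lra.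
Qed.

Lemma vc_server_on_server_unique i i' p t :
  vc_server_on T C i p t -> vc_server_on T C i' p t -> i = i'.
Proof.
move=> [j [win /andP[lo hi]]] [j' [win' /andP[lo' hi']]].
have Pi_gt0 : 0 < Pi by rewrite ltr0n (vc_Pi_gt0 i).
move: (int_window_unique Pi_gt0 win win') lo' hi' => <- lo' hi'.
by case: (ltngtP i i') => [/vc_prefix_le_prefix|/vc_prefix_le_prefix|/val_inj //] ?;
  exfalso; lra.
Qed.

Lemma vc_valid_schedule_of_util m :
  \sum_(k < n) C k / (T k)%:R <= m%:R -> vc_valid_schedule T C m.
Proof.
move=> util; split=> [i p t|i p p' t|i i' p t].
- exact: vc_server_on_proc_lt.
- exact: vc_server_on_proc_unique.
- exact: vc_server_on_server_unique.
Qed.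

Lemma vc_util_le_of_valid m :
  vc_valid_schedule T C m -> \sum_(k < n) C k / (T k)%:R <= m%:R.
Proof.
case=> proc_lt _ _; have [n0|n_gt0] := posnP n.
  by rewrite big1 // => i; have : (i < 0)%N by rewrite -[X in (_ < X)%N]n0.
have [i last] := vc_prefix_last n_gt0.
have Pi_gt0 : 0 < Pi by rewrite ltr0n (vc_Pi_gt0 i).
set U := \sum_(k < n) C k / (T k)%:R in last *.
rewrite sum_vc_Theta -/U in last.
have U_gt0 : 0 < U.
  rewrite -(pmulr_rgt0 _ Pi_gt0) -last.
  by have := vc_prefix_ge0 i; have := vc_Theta_gt0 i; lra.
pose p := `|Num.ceil U - 1|%N.
have pE : p%:R = (Num.ceil U)%:~R - 1 :> R.
  by rewrite natr_absz ger0_norm ?intrB // subr_ge0 -gtz0_ge1 ceil_gt0.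
have [ceil_lo ceil_hi] := (ceilB1_lt U, ceil_ge U); rewrite intrB mulr1z in ceil_lo.
have win : 0 < (U - p%:R) * Pi <= Pi.
  apply/andP; split; first by rewrite mulr_gt0 // subr_gt0; lra.
  by rewrite -[leRHS]mul1r ler_pM2r //; lra.
have slot : prefix i < p%:R * Pi + (U - p%:R) * Pi <= prefix i + Theta i.
  have := vc_Theta_gt0 i; rewrite mulrBl [U * _]mulrC => Theta_gt0.
  by apply/andP; split; lra.
have := proc_lt i p _ (vc_server_on_first_window win slot).
by rewrite -(ler_nat R) -natr1; lra.
Qed.

Lemma vc_server_min_window_supply i :
  min_window_supply (vc_server_active T C i) (T i)%:R (C i).
Proof.
move=> a S mS activeS; have Pi_gt0 : 0 < Pi by rewrite ltr0n (vc_Pi_gt0 i).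
rewrite -vc_Theta_mul_periods.
apply: (periodic_slots_measure (s := prefix i) (a := a) Pi_gt0 _ mS).
  by rewrite (ltW (vc_Theta_gt0 i)) vc_Theta_le_Pi.
move=> u [slot win]; apply: activeS; split; first exact: vc_server_active_slots.
by rewrite vc_periodsE.
Qed.

End ServerGeometry.

Theorem theorem6 (R : realType) (n : nat) (T : 'I_n -> nat) (C : 'I_n -> R)
    (m : nat) :
  (0 < m)%N ->
  (forall i, (0 < T i)%N) ->
  (forall i, 0 < C i <= (T i)%:R) ->
  VC_IDT_schedulable T C m <-> \sum_(i < n) C i / (T i)%:R <= m%:R.
Proof.
move=> _ T_gt0 C_bounds; split=> [[valid _]|util].
  exact: (vc_util_le_of_valid T_gt0 C_bounds valid).
split; first exact: vc_valid_schedule_of_util.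
move=> i r e x arrivals edf; apply: (edf_meets_deadlines arrivals edf).
exact: vc_server_min_window_supply.
Qed.
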